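(* Let $N,q,L\in\mathbb{N}_{\ge1}$, $0<\varepsilon\le\frac1{2NL}$, and let $s\in S=\frac1{NL}\{0,\dots,L-1\}^n$ satisfy $H(\varepsilon)\cap G(s)=\emptyset$, where $G(s)=\{s+\frac1Nv:v\in\{0,\dots,qN-1\}^n\}$. Let $H_{\mathrm{bound}}=(-\frac1N,0]^n+H$. Then $$\frac{|G(s)\setminus H_{\mathrm{bound}}|}{|G(s)|}\ge 1-\frac1N\cdot\frac{nD(q+1+A+C)^n(A+2/N)^{n-1}}{(Cq)^n}.$$
   Context: An $n$-dimensional infrastructure consists of a full-rank lattice $\Lambda\subset\mathbb{R}^n$, a finite non-empty set $X$, an injective map $d:X\to\mathbb{R}^n/\Lambda$, and a set $\mathrm{fRep}\subseteq X\times\mathbb{R}^n$ with $X\times\{0\}\subseteq\mathrm{fRep}$ such that $\Phi:\mathrm{fRep}\to\mathbb{R}^n/\Lambda$, $(x,t)\mapsto d(x)+t$, is a bijection. Let $\pi:\mathbb{R}^n\to\mathbb{R}^n/\Lambda$ be the projection, $\hat X=\pi^{-1}(d(X))$, and for $\hat x\in\hat X$ let $\hat V_{\hat x}=\{\hat x+t:(d^{-1}(\pi(\hat x)),t)\in\mathrm{fRep}\}$; these sets partition $\mathbb{R}^n$. Standing assumptions: the infrastructure is cornered (for each $\hat x$, $\hat x\in\hat V_{\hat x}$ and $\{r:\hat x\le r\le t\}\subseteq\hat V_{\hat x}$ for all $t\in\hat V_{\hat x}$, componentwise order); (A1) there is $A>0$ with $\hat V_{\hat x}\subseteq\hat x+[0,A]^n$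 for all $\hat x$; (A2) there are $C,D>0$ such that $(r+[0,C]^n)\cap\hat X$ has at most $D$ elements for every $r\in\mathbb{R}^n$. $H=\bigcup_{\hat x\in\hat X}\partial\hat V_{\hat x}$ (topological boundaries) and $H(\varepsilon)=H+[-\varepsilon,\varepsilon]^n$. *)

From HB Require Import structures.
From mathcomp Require Import all_boot all_order all_algebra.
From mathcomp Require Import all_classical all_reals.
From mathcomp Require Import topology normedtype.
Import numFieldNormedType.Exports.
Set Implicit Arguments. Unset Strict Implicit. Unset Printing Implicit Defensive.
Import Order.TTheory GRing.Theory Num.Theory.
Local Open Scope classical_set_scope.
Local Open Scope ring_scope.

Section Infra.
Variables (R : realType) (n : nat).
Notation vec := 'rV[R]_n.

Definition full_rank_lattice (Lam : set vec) : Prop :=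
  exists B : 'M[R]_n, B \in unitmx /\
    Lam = [set z *m B | z in [set z : vec | forall i, z 0 i \is a Num.int]].

(* An infrastructure (Lambda, X, d, fRep).  The map d : X -> R^n/Lambda is
   represented by a lift d : X -> R^n (d(x) = pi(d x)). *)
Definition infrastructure (Lam : set vec) (X : finType) (d : X -> vec)
    (fRep : set (X * vec)) : Prop :=
  [/\ full_rank_lattice Lam,
      (0 < #|X|)%N,
      (forall x y, Lam (d x - d y) -> x = y),
      (forall x, fRep (x, 0)) &
      (forall y : vec, exists! p, fRep p /\ Lam (y - (d p.1 + p.2)))]. (* Phi bij. *)

Definition Xhat (Lam : set vec) (X : finType) (d : X -> vec) : set vec :=
  [set xh | exists x, Lam (xh - d x)].

Definition Vhat (Lam : set vec) (X : finType) (d : X -> vec)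
    (fRep : set (X * vec)) (xh : vec) : set vec :=
  [set y | exists x t, [/\ Lam (xh - d x), fRep (x, t) & y = xh + t]].

Definition vle (u v : vec) : Prop := forall i, u 0 i <= v 0 i.

Definition cornered (Lam : set vec) (X : finType) (d : X -> vec)
    (fRep : set (X * vec)) : Prop :=
  forall xh, Xhat Lam d xh ->
    Vhat Lam d fRep xh xh /\
    (forall t, Vhat Lam d fRep xh t ->
       [set r | vle xh r /\ vle r t] `<=` Vhat Lam d fRep xh).

Definition box (r : vec) (a b : R) : set vec :=
  [set y | forall i, r 0 i + a <= y 0 i <= r 0 i + b].

Definition box_oc (r : vec) (a b : R) : set vec :=
  [set y | forall i, r 0 i + a < y 0 i <= r 0 i + b].

Definition msum (P Q : set vec) : set vec := [set p + q | p in P & q in Q].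

Definition boundary (V : set vec) : set vec := closure V `\` interior V.

Definition Hset (Lam : set vec) (X : finType) (d : X -> vec)
    (fRep : set (X * vec)) : set vec :=
  \bigcup_(xh in Xhat Lam d) boundary (Vhat Lam d fRep xh).

Definition at_most (A : set vec) (D : R) : Prop :=
  forall s : seq vec, uniq s -> (forall y, y \in s -> A y) -> (size s)%:R <= D.

Definition grid_pt (N q : nat) (s : vec) (v : {ffun 'I_n -> 'I_(q * N)}) : vec :=
  s + (N%:R)^-1 *: \row_i ((v i : nat)%:R).

End Infra.
Arguments grid_pt {R n} N q s v.

From HB Require Import structures.
From mathcomp Require Import all_boot all_order all_algebra.
From mathcomp Require Import all_classical all_reals.
From mathcomp Require Import topology normedtype.
From mathcomp Require Import ring lra zify.
Import numFieldNormedType.Exports.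
Import Order.TTheory GRing.Theory Num.Theory.
Local Open Scope classical_set_scope.
Local Open Scope ring_scope.
Set Implicit Arguments. Unset Strict Implicit. Unset Printing Implicit Defensive.

(* Since G(s) misses H(eps), every grid point g lies in the interior of some
   cell V xh, and if g is in Hbound then the diagonal step g + (1/N)(1, ..., 1)
   leaves that interior (corneredness makes the interior downward closed above
   xh). Such an edge point is determined by xh together with the coordinate i
   where g - xh is smallest and the integer parts, in units of 1/N, of the
   other coordinates measured from the level of the i-th one: two edge points
   with the same data differ by an integral multiple of the diagonal step, and
   a nonzero multiple would put one diagonal step of the lower point inside the
   cell. As xh lies in one of M^n cubes of side C, each containing at most D
   points of Xhat, there are at most D M^n n K^(n-1) edge points, where
   M <= (q + A)/C + 1 and K <= N A + 1. *)

Lemma nbhs_rowP (R : realType) n (x : 'rV[R]_n) (P : set 'rV[R]_n) :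
  nbhs x P <-> exists2 e, 0 < e & forall y : 'rV[R]_n, (forall i, `|x 0 i - y 0 i| < e) -> P y.
Proof.
split.
- move=> /nbhs_ballP [e e0 xeP]; exists e => //.
  move=> y xy; apply: xeP; split => // i j; rewrite (ord1 i); exact: xy.
- move=> [e e0 xeP]; apply/nbhs_ballP; exists e => // y [_ xy]; apply: xeP.
  exact: xy.
Qed.

Lemma row_shift_near (R : realType) n (x : 'rV[R]_n) (P : set 'rV[R]_n) :
  nbhs x P -> exists2 e, 0 < e & P (x + const_mx e) /\ P (x - const_mx e).
Proof.
move=> /nbhs_rowP [e e0 xeP]; exists (e / 2); first by rewrite divr_gt0.
have e2e : e / 2 < e by rewrite ltr_pdivrMr // ltr_pMr // ltr1n.
split; apply: xeP => i; rewrite !mxE ?opprD ?opprB addrA ?subrr ?add0r ?normrN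
  ger0_norm ?divr_ge0 ?ltW //.
Qed.

Lemma row_addcE (R : realType) m (u : 'rV[R]_m) a l :
  (u + const_mx a) 0 l = u 0 l + a.
Proof. by rewrite !mxE. Qed.

Lemma row_scaleBE (R : realType) m (a : R) (u w : 'rV[R]_m) l :
  (a *: (u - w)) 0 l = a * (u 0 l - w 0 l).
Proof. by rewrite !mxE. Qed.

Section Infrastructure.
Variables (R : realType) (n : nat) (Lam : set 'rV[R]_n) (X : finType).
Variables (d : X -> 'rV[R]_n) (fRep : set (X * 'rV[R]_n)).
Hypothesis infra : infrastructure Lam d fRep.

Local Notation V := (Vhat Lam d fRep).
Local Notation H := (Hset Lam d fRep).

Lemma Vhat_cover y : exists2 xh, Xhat Lam d xh & V xh y.
Proof.
case: infra => _ _ _ _ /(_ y) [[x t] [[xt_fRep /= yxt] _]].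
have xhx : Lam (y - t - d x) by rewrite opprD addrA addrAC in yxt.
by exists (y - t); [exists x | exists x, t; rewrite subrK].
Qed.

Lemma Vhat_disjoint xh xh' y : V xh y -> V xh' y -> xh = xh'.
Proof.
case: infra => _ _ _ _ /(_ y) [p [_ p_uniq]].
have coset u t x : Lam (u - d x) -> Lam (u + t - (d x + t)).
  by rewrite opprD addrACA subrr addr0.
move=> [x [t [xhx xt_fRep yE]]] [x' [t' [xhx' x't_fRep yE']]].
have /(congr1 snd) /= tt' : (x, t) = (x', t').
  rewrite -(p_uniq (x, t)) ?(p_uniq (x', t')) //; split => //=.
  - by rewrite yE'; exact: coset.
  - by rewrite yE; exact: coset.
by apply: (addIr t); rewrite -yE tt' -yE'.
Qed.

Lemma interior_of_not_Heps (eps : R) g :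
  0 <= eps -> ~ msum H (box 0 (- eps) eps) g ->
  exists2 xh, Xhat Lam d xh & interior (V xh) g.
Proof.
move=> eps0 g_far; have [xh xhX Vg] := Vhat_cover g.
exists xh => //; apply: contrapT => g_bd; apply: g_far.
exists g; first by exists xh => //; split => //; exact: subset_closure.
by exists 0; rewrite ?addr0 // => i; rewrite !mxE add0r; apply/andP; split; lra.
Qed.

Section Cornered.
Hypothesis corner : cornered Lam d fRep.
Variable A : R.
Hypothesis Vbox : forall xh, Xhat Lam d xh -> V xh `<=` box xh 0 A.

Lemma interior_Vhat_gt xh g : Xhat Lam d xh -> interior (V xh) g ->
  forall i, xh 0 i < g 0 i.
Proof.
move=> xhX /row_shift_near [e e0 [_ /(Vbox xhX) g_box]] i.
case/andP: (g_box i) => + _.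
by rewrite !mxE addr0 => /le_lt_trans; apply; rewrite ltrBlDr ltrDl.
Qed.

Lemma interior_Vhat_le xh g : Xhat Lam d xh -> interior (V xh) g ->
  forall i, g 0 i <= xh 0 i + A.
Proof.
by move=> xhX /nbhs_singleton /(Vbox xhX) g_box i; case/andP: (g_box i).
Qed.

Lemma interior_Vhat_lower xh (a b : 'rV[R]_n) : Xhat Lam d xh ->
  (forall i, xh 0 i < a 0 i) -> (forall i, a 0 i <= b 0 i) ->
  interior (V xh) b -> interior (V xh) a.
Proof.
move=> xhX xa ab /row_shift_near [e e0 [Vb' _]].
have below := (corner xhX).2 _ Vb'.
pose e' := \big[Order.min/e]_i (a 0 i - xh 0 i).
have e'0 : 0 < e' by apply/bigmin_gtP; split => // i _; rewrite subr_gt0.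
have e'le i : e' <= a 0 i - xh 0 i by exact: bigmin_le.
have e'e : e' <= e by exact: bigmin_le_id.
apply/nbhs_rowP; exists e' => // y ay; apply: below; split => i;
  have := ay i; have := e'le i; have := ab i; rewrite ?mxE ltr_norml; lra.
Qed.

(* A point of Hbound lies just below a point of H, hence one step of size w up
   the diagonal leaves the interior of the cell containing it. *)
Lemma Hbound_step_out (w : R) xh g : Xhat Lam d xh -> interior (V xh) g ->
  msum (box_oc 0 (- w) 0) H g -> ~ interior (V xh) (g + const_mx w).
Proof.
move=> xhX Vg [b b_box [h [xh' _ [h_cl h_int]] hbg]] Vgw; apply: h_int.
have gh i : g 0 i <= h 0 i <= g 0 i + w.
  by have := b_box i; rewrite -hbg !mxE !add0r; move=> /andP [? ?]; apply/andP; lra.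
have Vh : interior (V xh) h.
  apply: (interior_Vhat_lower xhX _ _ Vgw) => i; have /andP [? ?] := gh i.
    exact: lt_le_trans (interior_Vhat_gt xhX Vg i) _.
  by rewrite !mxE.
have [z [V'z Vz]] := h_cl _ Vh.
by rewrite (Vhat_disjoint V'z Vz).
Qed.

End Cornered.
End Infrastructure.

Lemma int_eq_of_near (R : realType) (z w : int) : `|z%:~R - w%:~R : R| < 1 -> z = w.
Proof.
rewrite ltr_norml -intrB -[1]/(1%:~R : R) -(intrN _ 1) !ltr_int; lia.
Qed.

Section DiagonalCode.
Variables (R : realType) (n : nat).

Definition diag_code (K : nat) (t : 'rV[R]_n.+1) (i : 'I_n.+1)
    (c : {ffun 'I_n -> 'I_K}) : Prop :=
  exists k : int, k%:~R < t 0 i <= k%:~R + 1 /\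
    forall l, (c l)%:R <= t 0 (lift i l) - k%:~R < (c l)%:R + 1.

Lemma diag_code_exists (B : R) (t : 'rV[R]_n.+1) :
  (forall l, 0 < t 0 l <= B) ->
  exists i (c : {ffun 'I_n -> 'I_(Num.truncn B).+1}), diag_code t i c.
Proof.
move=> t_pos; case: (arg_minP (fun l => t 0 l) (isT : predT ord0)) => i _ t_min.
set k := Num.ceil (t 0 i) - 1.
have /andP [kt tk] : k%:~R < t 0 i <= k%:~R + 1.
  by rewrite -intrD1 /k subrK; exact: ceil_itv.
have k0 : (0 : R) <= k%:~R.
  have := t_pos i; rewrite ler0z /k -ceil_gt0 => /andP [+ _]; lia.
have tk0 l : 0 <= t 0 l - k%:~R by have := t_min l isT; lra.
exists i, [ffun l => inord (Num.truncn (t 0 (lift i l) - k%:~R))], k.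
split=> [|l]; first by apply/andP.
rewrite ffunE inordK; first by rewrite natr1; exact: truncn_itv.
by rewrite ltnS le_truncn //; have := t_pos (lift i l); lra.
Qed.

Lemma diag_code_shift K (t t' : 'rV[R]_n.+1) i (c : {ffun 'I_n -> 'I_K})
    (z : 'I_n.+1 -> int) :
  diag_code t i c -> diag_code t' i c ->
  (forall l, t 0 l - t' 0 l = (z l)%:~R) -> exists w : int, forall l, z l = w.
Proof.
move=> [k [/andP [kt tk] t_code]] [k' [/andP [kt' tk'] t'_code]] tz.
exists (k - k') => l; apply: (@int_eq_of_near R); rewrite intrB -(tz l).
have [l' ->|->] := unliftP i l; rewrite ltr_norml; last by apply/andP; lra.
by have := t_code l'; have := t'_code l'; move=> /andP [? ?] /andP [? ?]; apply/andP; lra.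
Qed.

End DiagonalCode.

Lemma card_le_fibers (R : realType) m (T I : finType) (B : {pred T})
    (code : T -> I) (pt : T -> 'rV[R]_m) (P : I -> set 'rV[R]_m) (D : R) :
  (forall tau, at_most (P tau) D) ->
  {in B, forall v, P (code v) (pt v)} ->
  {in B &, forall v v', code v = code v' -> pt v = pt v' -> v = v'} ->
  #|B|%:R <= D * #|I|%:R.
Proof.
move=> PD BP pt_inj.
have -> : #|B|%:R = \sum_(v in B) 1 :> R by rewrite sumr_const.
rewrite mulr_natr -sumr_const (partition_big code predT) //=.
apply: ler_sum => tau _.
rewrite sumr_const cardE -(size_map pt); apply: (PD tau).
- rewrite map_inj_in_uniq ?enum_uniq // => v v'; rewrite !mem_enum.
  by move=> /andP [vB /eqP vtau] /andP [v'B /eqP v'tau]; apply: pt_inj; rewrite ?vtau.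
- move=> y /mapP [v]; rewrite mem_enum => /andP [vB /eqP <-] ->.
  exact: BP.
Qed.

Section Grid.
Variables (R : realType) (n N q : nat) (s : 'rV[R]_n).
Hypothesis N_gt0 : (0 < N)%N.
Implicit Types v : {ffun 'I_n -> 'I_(q * N)}.

Lemma grid_ptE v l : grid_pt N q s v 0 l = s 0 l + (N%:R)^-1 * (v l)%:R.
Proof. by rewrite !mxE. Qed.

Lemma grid_pt_range v l : s 0 l <= grid_pt N q s v 0 l < s 0 l + q%:R.
Proof.
have N0 : (0 : R) < N%:R by rewrite ltr0n.
rewrite grid_ptE lerDl ltrD2l mulr_ge0 ?invr_ge0 ?ler0n //= ltr_pdivrMl //.
by rewrite -natrM ltr_nat [(N * q)%N]mulnC ltn_ord.
Qed.

Lemma N_grid_ptB v v' l :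
  N%:R * (grid_pt N q s v 0 l - grid_pt N q s v' 0 l) = (v l)%:R - (v' l)%:R :> R.
Proof.
rewrite !grid_ptE opprD addrACA subrr add0r -mulrBr mulrA mulfV ?mul1r //.
by rewrite pnatr_eq0 -lt0n.
Qed.

End Grid.

Definition grid_cell (R : realType) n M (s : 'rV[R]_n) (A C : R)
    (j : {ffun 'I_n -> 'I_M}) : 'rV[R]_n :=
  \row_l (s 0 l - A + C * (j l)%:R).

Lemma grid_cell_exists (R : realType) n (s xh : 'rV[R]_n) (A C Q : R) :
  0 < C -> (forall l, s 0 l - A <= xh 0 l < s 0 l + Q) ->
  exists j : {ffun 'I_n -> 'I_(Num.truncn ((Q + A) / C)).+1},
    box (grid_cell s A C j) 0 C xh.
Proof.
move=> C0 xh_range.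
have x0 l : 0 <= (xh 0 l - s 0 l + A) / C.
  by have /andP [? ?] := xh_range l; rewrite divr_ge0 ?(ltW C0) //; lra.
exists [ffun l => inord (Num.truncn ((xh 0 l - s 0 l + A) / C))] => l.
rewrite !mxE ffunE addr0 inordK; last first.
  by rewrite ltnS le_truncn ?ler_pM2r ?invr_gt0 //; have /andP [? ?] := xh_range l; lra.
have /andP [tx xt] := truncn_itv (x0 l); rewrite -natr1 in xt.
set x := (xh 0 l - s 0 l + A) / C in tx xt *.
have xC : C * x = xh 0 l - s 0 l + A by rewrite mulrC divfK ?gt_eqF.
rewrite -(ler_pM2l C0) in tx; rewrite -(ltr_pM2l C0) mulrDr mulr1 in xt.
apply/andP; split; lra.
Qed.

Section EdgeCount.
Variables (R : realType) (n : nat) (Lam : set 'rV[R]_n.+1) (X : finType).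
Variables (d : X -> 'rV[R]_n.+1) (fRep : set (X * 'rV[R]_n.+1)).
Hypothesis infra : infrastructure Lam d fRep.
Hypothesis corner : cornered Lam d fRep.
Variables (A C D : R) (N q : nat) (s : 'rV[R]_n.+1).
Hypothesis Vbox : forall xh, Xhat Lam d xh -> Vhat Lam d fRep xh `<=` box xh 0 A.
Hypothesis C_gt0 : 0 < C.
Hypothesis at_most_D : forall r, at_most (box r 0 C `&` Xhat Lam d) D.
Hypothesis N_gt0 : (0 < N)%N.

Local Notation V := (Vhat Lam d fRep).
Local Notation g := (grid_pt N q s).
Local Notation step := (const_mx (N%:R : R)^-1).
Local Notation M := (Num.truncn ((q%:R + A) / C)).+1.
Local Notation K := (Num.truncn (N%:R * A)).+1.

Definition edge_code v (p : ({ffun 'I_n.+1 -> 'I_M} * 'I_n.+1 * {ffun 'I_n -> 'I_K})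
    * 'rV[R]_n.+1) : Prop :=
  let: ((j, i, c), xh) := p in
  [/\ Xhat Lam d xh, interior (V xh) (g v), ~ interior (V xh) (g v + step),
      box (grid_cell s A C j) 0 C xh & diag_code (N%:R *: (g v - xh)) i c].

Lemma edge_code_exists v xh :
  Xhat Lam d xh -> interior (V xh) (g v) -> ~ interior (V xh) (g v + step) ->
  exists p, edge_code v p.
Proof.
move=> xhX Vg edge.
have N0 : (0 : R) < N%:R by rewrite ltr0n.
have above := interior_Vhat_gt Vbox xhX Vg.
have below := interior_Vhat_le Vbox xhX Vg.
have xh_range l : s 0 l - A <= xh 0 l < s 0 l + q%:R.
  have := above l; have := below l; have /andP [? ?] := grid_pt_range s N_gt0 v l.
  by move=> ? ?; apply/andP; lra.
have [j cell] := grid_cell_exists C_gt0 xh_range.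
have t_range l : 0 < (N%:R *: (g v - xh)) 0 l <= N%:R * A.
  rewrite row_scaleBE pmulr_rgt0 ?ler_pM2l; try exact: N0.
  by rewrite subr_gt0 above /=; have := below l; lra.
have [i [c code]] := diag_code_exists t_range.
by exists ((j, i, c), xh); split.
Qed.

Lemma edge_no_diagonal_gap xh u u' (k : int) : Xhat Lam d xh ->
  interior (V xh) (g u) -> interior (V xh) (g u') -> ~ interior (V xh) (g u' + step) ->
  (forall l, (u l)%:Z - (u' l)%:Z = k) -> (0 < k)%R -> False.
Proof.
move=> xhX Vu Vu' edge uk k0; apply: edge.
have N0 : (0 : R) < N%:R by rewrite ltr0n.
apply: (interior_Vhat_lower corner xhX _ _ Vu) => l; rewrite row_addcE.
  have := interior_Vhat_gt Vbox xhX Vu' l.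
  have : 0 < (N%:R : R)^-1 by rewrite invr_gt0.
  lra.
have gap : 1 <= N%:R * (g u 0 l - g u' 0 l).
  rewrite N_grid_ptB //.
  have -> : (u l)%:R - (u' l)%:R = ((u l)%:Z - (u' l)%:Z)%:~R :> R by rewrite intrB.
  by rewrite uk ler1z.
have : (N%:R)^-1 <= g u 0 l - g u' 0 l by rewrite -[N%:R^-1]mulr1 ler_pdivrMl.
lra.
Qed.

Lemma edge_code_inj v v' j i c xh :
  edge_code v ((j, i, c), xh) -> edge_code v' ((j, i, c), xh) -> v = v'.
Proof.
move=> [xhX Vg edge _ code] [_ Vg' edge' _ code'].
have vv' l : (N%:R *: (g v - xh)) 0 l - (N%:R *: (g v' - xh)) 0 l
    = ((v l)%:Z - (v' l)%:Z)%:~R.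
  by rewrite !row_scaleBE -mulrBr opprB addrA subrK (N_grid_ptB _ N_gt0) intrB.
have [w vw] := diag_code_shift (z := fun l => (v l)%:Z - (v' l)%:Z) code code' vv'.
apply/ffunP => l; apply/val_inj.
case: (ltgtP w 0) => [w0|w0|w0].
- case: (edge_no_diagonal_gap (k := - w) xhX Vg' Vg edge); last by rewrite oppr_gt0.
  by move=> l'; rewrite -(vw l') opprB.
- by case: (edge_no_diagonal_gap xhX Vg Vg' edge' vw w0).
- by have /eqP := vw l; rewrite w0 subr_eq0 => /eqP [vl].
Qed.

Lemma card_grid_edge :
  (forall v, exists2 xh, Xhat Lam d xh & interior (V xh) (g v)) ->
  #|[set v | g v \in msum (box_oc 0 (- (N%:R)^-1) 0) (Hset Lam d fRep)]|%:R
    <= D * (M ^ n.+1 * n.+1 * K ^ n)%:R.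
Proof.
move=> g_int; set B := [set v | _].
have codeP v : exists p, v \in B -> edge_code v p.
  have [vB|_] := boolP (v \in B); last by exists (([ffun=> ord0], ord0, [ffun=> ord0]), 0).
  have [xh xhX Vg] := g_int v.
  have Hb : msum (box_oc 0 (- (N%:R)^-1) 0) (Hset Lam d fRep) (g v).
    by move: vB; rewrite inE => /set_mem.
  have [p vp] := edge_code_exists xhX Vg (Hbound_step_out infra corner Vbox xhX Vg Hb).
  by exists p.
have [f fP] := choice codeP.
have -> : #|B| = #|[pred v | v \in B]| by apply: eq_card.
apply: le_trans (card_le_fibers (B := [pred v in B]) (code := fun v => (f v).1)
  (pt := fun v => (f v).2) (fun tau => @at_most_D (grid_cell s A C tau.1.1)) _ _) _.
- move=> v /fP; case: (f v) => [[[j i] c] xh] [xhX _ _ cell _]; by split.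
- move=> v v' vB v'B e1 e2; have := fP v' v'B.
  rewrite [f v']surjective_pairing -e1 -e2.
  case: (f v) (fP v vB) => [[[j i] c] xh] /=; exact: edge_code_inj.
- by rewrite !card_prod !card_ffun !card_ord.
Qed.

End EdgeCount.

Lemma card_grid_edge_dim0 (R : realType) (Lam : set 'rV[R]_0) (X : finType)
    (d : X -> 'rV[R]_0) (fRep : set (X * 'rV[R]_0)) (A : R) (N q : nat) (s : 'rV[R]_0) :
  infrastructure Lam d fRep -> cornered Lam d fRep ->
  (forall xh, Xhat Lam d xh -> Vhat Lam d fRep xh `<=` box xh 0 A) ->
  (forall v, exists2 xh, Xhat Lam d xh & interior (Vhat Lam d fRep xh) (grid_pt N q s v)) ->
  #|[set v | grid_pt N q s v \in msum (box_oc 0 (- (N%:R)^-1) 0) (Hset Lam d fRep)]| = 0%N.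
Proof.
move=> infra corner Vbox g_int; apply: eq_card0 => v; apply/negP => /set_mem /set_mem Hb.
have [xh xhX Vg] := g_int v.
apply: (Hbound_step_out infra corner Vbox xhX Vg Hb).
by have -> : grid_pt N q s v + const_mx (N%:R)^-1 = grid_pt N q s v by apply/rowP => -[].
Qed.

Lemma card_notin_ratio (R : numFieldType) (T : finType) (U : Type) (f : T -> U) (S : set U) :
  (0 < #|T|)%N ->
  #|[set v | f v \notin S]|%:R / #|[set: T]|%:R
    = 1 - #|[set v | f v \in S]|%:R / #|T|%:R :> R.
Proof.
move=> T_gt0.
have -> : #|[set: T]| = #|T| by apply: eq_card => v; rewrite in_setT.
have -> : #|[set v | f v \notin S]| = #|[predC mem [set v | f v \in S]]|.
  apply: eq_card => v; apply/idP/idP => [/set_mem vS | vS].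
    by apply/negP => /set_mem; exact/negP.
  rewrite in_setE /=; apply/negP => fvS; move: vS; rewrite inE => /negP; apply.
  exact: mem_set.
have T_nz : #|T|%:R != 0 :> R by rewrite pnatr_eq0 -lt0n.
rewrite -(cardC (mem [set v | f v \in S])) natrD in T_nz *.
by field.
Qed.

Lemma density_bound_le (R : realType) n (A C D Mr Kr : R) (N q : nat) :
  0 < C -> 0 <= D -> (0 < N)%N -> (0 < q)%N -> 0 <= Mr -> 0 <= Kr ->
  Mr <= (q%:R + A) / C + 1 -> Kr <= N%:R * A + 1 ->
  D * (Mr ^+ n.+1 * n.+1%:R * Kr ^+ n) / ((q * N) ^ n.+1)%:R
    <= (N%:R)^-1 * (n.+1%:R * D * (q%:R + 1 + A + C) ^+ n.+1 * (A + 2 / N%:R) ^+ n)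
       / (C * q%:R) ^+ n.+1.
Proof.
move=> C0 D0 N0 q0 Mr0 Kr0 MrB KrB.
set P := q%:R + 1 + A + C; set Q := A + 2 / N%:R.
have N0' : (0 : R) < N%:R by rewrite ltr0n.
have q0' : (0 : R) < q%:R by rewrite ltr0n.
have MrP : Mr <= P / C.
  by apply: le_trans MrB _; rewrite ler_pdivlMr // mulrDl divfK ?gt_eqF // /P; lra.
have KrQ : Kr <= N%:R * Q.
  by rewrite /Q mulrDr mulrCA mulfV ?gt_eqF // mulr1; lra.
apply: (@le_trans _ _ (D * ((P / C) ^+ n.+1 * n.+1%:R * (N%:R * Q) ^+ n)
    / ((q * N) ^ n.+1)%:R)).
  rewrite ler_pM2r ?invr_gt0 ?ltr0n ?expn_gt0 ?muln_gt0 ?q0 ?N0 //.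
  apply: ler_wpM2l => //; apply: ler_pM; rewrite ?mulr_ge0 ?exprn_ge0 //.
  - by rewrite ler_pM2r ?ltr0n // lerXn2r // nnegrE; exact: le_trans MrP.
  - by rewrite lerXn2r // nnegrE; exact: le_trans KrQ.
rewrite le_eqVlt; apply/orP; left; apply/eqP.
have nz (x : R) : 0 < x -> x ^+ n != 0 by move=> x0; rewrite expf_neq0 ?gt_eqF.
rewrite natrX natrM !exprMn !exprVn !exprS.
have := nz C C0; have := nz _ N0'; have := nz _ q0'.
move: (C ^+ n) (N%:R ^+ n : R) (q%:R ^+ n : R) (P ^+ n) (Q ^+ n) (n.+1%:R : R).
move=> cn nn qn pn qqn m qn0 nn0 cn0.
field.
by rewrite qn0 nn0 cn0 !gt_eqF.
Qed.

Unset Implicit Arguments. Set Strict Implicit.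

Theorem proposition5p1 (R : realType) (n : nat) (Lam : set 'rV[R]_n)
  (X : finType) (d : X -> 'rV[R]_n) (fRep : set (X * 'rV[R]_n))
  (A C D : R) (N q L : nat) (eps : R) (s : 'rV[R]_n) :
  infrastructure Lam d fRep ->
  cornered Lam d fRep ->
  0 < A ->
  (forall xh, Xhat Lam d xh -> Vhat Lam d fRep xh `<=` box xh 0 A) ->
  0 < C -> 0 < D ->
  (forall r, at_most (box r 0 C `&` Xhat Lam d) D) ->
  (0 < N)%N -> (0 < q)%N -> (0 < L)%N ->
  0 < eps -> eps <= (2 * N%:R * L%:R)^-1 ->
  (exists k : 'I_n -> nat, (forall i, (k i < L)%N) /\
      s = (N%:R * L%:R)^-1 *: \row_i ((k i)%:R)) ->
  (forall v, ~ msum (Hset Lam d fRep) (box 0 (- eps) eps) (grid_pt N q s v)) ->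
  let Hbound := msum (box_oc 0 (- (N%:R)^-1) 0) (Hset Lam d fRep) in
  (#|[set v : {ffun 'I_n -> 'I_(q * N)} | grid_pt N q s v \notin Hbound]|%:R
     / #|[set: {ffun 'I_n -> 'I_(q * N)}]|%:R : R)
  >= 1 - (N%:R)^-1 * (n%:R * D * (q%:R + 1 + A + C) ^+ n * (A + 2 / N%:R) ^+ n.-1)
         / (C * q%:R) ^+ n.
Proof.
move=> infra corner A_gt0 Vbox C_gt0 D_gt0 at_most_D N_gt0 q_gt0 _ eps_gt0 _ _ far_H.
cbv zeta.
have g_int v := interior_of_not_Heps infra (ltW eps_gt0) (far_H v).
rewrite card_notin_ratio ?card_ffun ?card_ord ?expn_gt0 ?muln_gt0 ?q_gt0 ?N_gt0 //.
rewrite lerD2l lerN2.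
move: Lam d fRep s infra corner Vbox at_most_D far_H g_int.
case: n => [|n] Lam d fRep s infra corner Vbox at_most_D _ g_int.
  by rewrite (card_grid_edge_dim0 infra corner Vbox g_int) !(mul0r, mulr0).
rewrite [n.+1.-1]/=.
apply: le_trans _ (density_bound_le n (Mr := (Num.truncn ((q%:R + A) / C)).+1%:R)
  (Kr := (Num.truncn (N%:R * A)).+1%:R) C_gt0 (ltW D_gt0) N_gt0 q_gt0 _ _ _ _);
  rewrite ?ler0n //.
- rewrite ler_pM2r ?invr_gt0 ?ltr0n ?expn_gt0 ?muln_gt0 ?q_gt0 ?N_gt0 //.
  by rewrite -!natrX -!natrM; exact: card_grid_edge.
- by rewrite -natr1 lerD2r truncn_le divr_ge0 ?ltW // addr_gt0 // ltr0n.
- by rewrite -natr1 lerD2r truncn_le mulr_ge0 // ltW.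
Qed.
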